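(* Let $\mathcal{X}$ be a finite set of actions, $\mathcal{Y}$ a finite set of responses, $\mathcal{H}\subseteq\mathcal{Y}^{\mathcal{X}}$, $\mathrm{cost}:\mathcal{X}\times\mathcal{Y}\to\mathbb{R}_+$. Let $f:2^{\mathcal{X}\times\mathcal{Y}}\to\mathbb{R}_+$, $Q>0$, $\eta>0$ be such that $f$ is monotone non-decreasing and submodular, $f(\emptyset)=0$, for every $S$, $f(S)\ge Q-\eta$ implies $f(S)\ge Q$, and $f$ is consistency-aware for $Q$. Let $\mathcal{A}$ be an interactive algorithm that obtains $f(S)\ge Q$ at termination (i.e. $f(S^h[\mathcal{A}])\ge Q$ for all $h\in\mathcal{H}$). Let $\gamma=r_{\mathrm{cost}}$ if $\mathcal{A}$ is bifurcating, and $\gamma=R_{\mathrm{cost}}$ otherwise. Then there exists $x\in\mathcal{X}$ such that $$u^f(x,\emptyset)\ge \frac{Q}{\gamma\cdot\mathrm{cost}(\mathcal{A})}.$$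
   Context: The true state is an unknown $h^*\in\mathcal{H}$. An interactive algorithm $\mathcal{A}$, given the set $S\subseteq\mathcal{X}\times\mathcal{Y}$ of pairs observed so far, outputs either an action $\mathcal{A}(S)\in\mathcal{X}$ (yielding the pair $(x,h^*(x))$, which is added to $S$) or terminates. $S^h_t[\mathcal{A}]$ / $S^h[\mathcal{A}]$ denote the pairs collected in the first $t$ iterations / until termination when $h^*=h$. $\mathrm{cost}(S)=\sum_{(x,y)\in S}\mathrm{cost}(x,y)$, $\mathrm{cost}(\mathcal{A})=\max_{h\in\mathcal{H}}\mathrm{cost}(S^h[\mathcal{A}])$. Version space $V(S)=\{h\in\mathcal{H}\mid\forall(x,y)\in S,\ y=h(x)\}$; $\mathcal{Y}(x,S)=\{h(x)\mid h\in V(S)\}$. $\mathcal{A}$ is bifurcating if for all $t$ and $h\in\mathcal{H}$ (at which $\mathcal{A}$ selects an action), $|\mathcal{Y}(\mathcal{A}(S^h_t[\mathcal{A}]),S^h_t[\mathcal{A}])|\ge 2$. $f$ is consistency-aware for $Q$ if $f(S)\ge Q$ for all $S$ with $V(S)=\emptyset$. $\delta_g(z\mid A)=g(A\cup\{z\})-g(A)$; $u^f(x,S)=\min_{h\in V(S)}\frac{\delta_{\min(f,Q)}((x,h(x))\mid S)}{\mathrm{cost}(x,h(x))}$. Cost ratio: $R_{\mathrm{cost}}=\max_{x\in\mathcal{X}}\frac{\max_{y}\mathrm{cost}(x,y)}{\min_y\mathrm{cost}(x,y)}$. Second-smallest cost ratio: $\phi(x)$ is the second-smallest value in the multiset $\{\mathrm{cost}(x,y)\mid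 y\in\mathcal{Y}\}$ and $r_{\mathrm{cost}}=\max_{x,y}\frac{\mathrm{cost}(x,y)}{\phi(x)}$. *)

From HB Require Import structures.
From mathcomp Require Import all_boot all_order all_algebra.
From Stdlib Require ClassicalEpsilon.
Set Implicit Arguments. Unset Strict Implicit. Unset Printing Implicit Defensive.
Import Order.TTheory GRing.Theory Num.Theory.
Local Open Scope ring_scope.

Section Defs.
Variables (R : realFieldType) (X Y : finType).

Notation hyp := {ffun X -> Y}.
(* an interactive algorithm: given the observed set S, select an action or
   terminate (None) *)
Definition ialg := {set X * Y} -> option X.

Fixpoint run (A : ialg) (h : hyp) (t : nat) : {set X * Y} :=
  match t with
  | 0 => set0
  | t'.+1 => let S := run A h t' in
             match A S with
             | Some x => (x, h x) |: S
             | None => S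
             end
  end.

Definition terminates (A : ialg) (H : {set hyp}) : Prop :=
  forall h, h \in H -> exists t, A (run A h t) = None.

(* first termination time (chosen classically; meaningful when A terminates) *)
Definition stop_time (A : ialg) (h : hyp) : nat :=
  ClassicalEpsilon.epsilon (inhabits 0%N)
    (fun t => A (run A h t) = None /\ forall s, (s < t)%N -> A (run A h s) <> None).

Definition final (A : ialg) (h : hyp) : {set X * Y} := run A h (stop_time A h).

Definition costS (cost : X -> Y -> R) (S : {set X * Y}) : R :=
  \sum_(p in S) cost p.1 p.2.

(* cost(A) = max_{h in H} cost(S^h[A]) (costs are nonnegative) *)
Definition costA (cost : X -> Y -> R) (H : {set hyp}) (A : ialg) : R :=
  \big[Num.max/0]_(h in H) costS cost (final A h).

Definition V (H : {set hyp}) (S : {set X * Y}) : {set hyp} :=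
  [set h in H | [forall p in S, h p.1 == p.2]].

Definition Yset (H : {set hyp}) (x : X) (S : {set X * Y}) : {set Y} :=
  (fun h : hyp => h x) @: V H S.

Definition bifurcating (H : {set hyp}) (A : ialg) : Prop :=
  forall h t x, h \in H -> A (run A h t) = Some x ->
    (2 <= #|Yset H x (run A h t)|)%N.

Definition consistency_aware (H : {set hyp}) (f : {set X * Y} -> R) (Q : R) : Prop :=
  forall S : {set X * Y}, V H S = set0 -> Q <= f S.

Definition monotone (f : {set X * Y} -> R) : Prop :=
  forall S T : {set X * Y}, S \subset T -> f S <= f T.

Definition submodular (f : {set X * Y} -> R) : Prop :=
  forall S T : {set X * Y}, f (S :|: T) + f (S :&: T) <= f S + f T.

Definition deltaQ (f : {set X * Y} -> R) (Q : R) (z : X * Y) (S : {set X * Y}) : R :=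
  Num.min (f (z |: S)) Q - Num.min (f S) Q.

Definition ratio_u (f : {set X * Y} -> R) (Q : R) (cost : X -> Y -> R)
  (x : X) (S : {set X * Y}) (h : hyp) : R :=
  deltaQ f Q (x, h x) S / cost x (h x).

(* u^f(x,S) = min over h in V(S) (0 if V(S) is empty, never used) *)
Definition ufun (H : {set hyp}) (f : {set X * Y} -> R) (Q : R)
  (cost : X -> Y -> R) (x : X) (S : {set X * Y}) : R :=
  match [pick h in V H S] with
  | Some h0 => \big[Num.min/ratio_u f Q cost x S h0]_(h in V H S) ratio_u f Q cost x S h
  | None => 0
  end.

Definition maxcost (cost : X -> Y -> R) (x : X) : R := \big[Num.max/0]_y cost x y.
Definition mincost (cost : X -> Y -> R) (x : X) : R :=
  \big[Num.min/maxcost cost x]_y cost x y.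

Definition Rcost (cost : X -> Y -> R) : R :=
  \big[Num.max/0]_x (maxcost cost x / mincost cost x).

Definition phi (cost : X -> Y -> R) (x : X) : R :=
  nth 0 (sort <=%R [seq cost x y | y <- enum Y]) 1.

Definition rcost (cost : X -> Y -> R) : R :=
  \big[Num.max/0]_x \big[Num.max/0]_y (cost x y / phi cost x).

End Defs.

From HB Require Import structures.
From mathcomp Require Import all_boot all_order all_algebra.
From mathcomp Require Import lra.
From Stdlib Require Import ClassicalEpsilon Classical.
Set Implicit Arguments. Unset Strict Implicit. Unset Printing Implicit Defensive.
Import Order.TTheory GRing.Theory Num.Theory.
Local Open Scope ring_scope.

(* Suppose every action x has u^f(x, {}) < b := Q / (gamma cost(A)).  Then each x
   has a response y_x, given by some hypothesis of H, with
   min(f{(x, y_x)}, Q) < b cost(x, y_x); run A against the adversary g : x |-> y_x.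
   Either some hypothesis h of H stays consistent with g up to termination, and the
   run is that of h, or the version space empties at some first step, and f reaches
   Q by consistency awareness.  In both cases g's answers form a set S with
   f(S) >= Q and cost(S) <= gamma cost(A): at the emptying step, gamma bounds the
   cost of g's answer by that of a different answer of a consistent hypothesis,
   whose own run pays for it.  Subadditivity of min(f, Q) over singletons then
   gives Q <= sum_(p in S) min(f{p}, Q) < b cost(S) <= Q. *)

Lemma count_enum_card (T : finType) (P : pred T) : count P (enum T) = #|P|.
Proof. by rewrite cardE enumT /enum_mem size_filter; apply: eq_count. Qed.

Lemma minrD_le {R : realDomainType} {a b c : R} : 0 <= a -> 0 <= b -> 0 <= c ->
  Num.min (a + b) c <= Num.min a c + Num.min b c.
Proof.
move=> a0 b0 c0; have [ac|/ltW ca] := leP a c; have [bc|/ltW cb] := leP b c;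
  rewrite ?(min_l ac) ?(min_r ca) ?(min_l bc) ?(min_r cb) ge_min; apply/orP.
- by left.
- by right; rewrite lerDr.
- by right; rewrite lerDl.
- by right; rewrite lerDl.
Qed.

Lemma min_sum_le {R : realDomainType} {I : Type} {r : seq I} {P : pred I} {F : I -> R}
  {c : R} :
  0 <= c -> (forall i, P i -> 0 <= F i) ->
  Num.min (\sum_(i <- r | P i) F i) c <= \sum_(i <- r | P i) Num.min (F i) c.
Proof.
move=> c0 F_ge0; suff [] : 0 <= \sum_(i <- r | P i) F i /\
    Num.min (\sum_(i <- r | P i) F i) c <= \sum_(i <- r | P i) Num.min (F i) c by [].
elim/big_rec2: _ => [|i t s Pi [s0 st]]; first by rewrite min_l.
split; first by rewrite addr_ge0 ?F_ge0.
by apply: le_trans (minrD_le (F_ge0 i Pi) s0 c0) _; rewrite lerD2l.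
Qed.

Section Runs.
Variables (X Y : finType) (A : ialg X Y).
Implicit Types (g h : {ffun X -> Y}) (S T : {set X * Y}).

Lemma run_subset h t t' : (t <= t')%N -> run A h t \subset run A h t'.
Proof.
move/subnK <-; elim: (t' - t)%N => [|k IH] //; rewrite addSn.
by apply: subset_trans IH _ => /=; case: (A _) => [x|] //; apply: subsetUr.
Qed.

Lemma run_graph h t p : p \in run A h t -> p.2 = h p.1.
Proof.
elim: t => [|t IH] /=; first by rewrite inE.
by case: (A _) => [x|] //; rewrite in_setU1 => /predU1P [-> //|/IH].
Qed.

Lemma run_stop h t k : A (run A h t) = None -> run A h (k + t) = run A h t.
Proof. by move=> At; elim: k => [|k /= ->] //; rewrite At. Qed.

Lemma stop_timeP h :
  (exists t, A (run A h t) = None) -> A (run A h (stop_time A h)) = None.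
Proof.
move=> [t At]; have ex_t : exists t, A (run A h t) == None by exists t; rewrite At.
case: (ex_minnP ex_t) => m /eqP Am m_min.
suff /(epsilon_spec (inhabits 0%N)) [] :
  exists t, A (run A h t) = None /\ forall s, (s < t)%N -> A (run A h s) <> None by [].
exists m; split => // s; rewrite ltnNge => /negP s_m /eqP As; exact/s_m/m_min.
Qed.

Lemma final_run h t : (exists t, A (run A h t) = None) ->
  (stop_time A h <= t)%N -> final A h = run A h t.
Proof. by move=> /stop_timeP Astop /subnK <-; rewrite run_stop. Qed.

Lemma run_subset_final h t :
  (exists t, A (run A h t) = None) -> run A h t \subset final A h.
Proof.
move=> A_stops; have [t_le|/ltnW stop_le] := leqP t (stop_time A h).
  exact: run_subset.
by rewrite (final_run A_stops stop_le) subxx.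
Qed.

Lemma run_neq0_select h t : run A h t != set0 -> exists s x, A (run A h s) = Some x.
Proof.
elim: t => [|t IH] /=; first by rewrite eqxx.
by case At: (A _) => [x|]; [exists t, x | exact: IH].
Qed.

Variable H : {set {ffun X -> Y}}.

Lemma VP S h : reflect (h \in H /\ forall p, p \in S -> h p.1 = p.2) (h \in V H S).
Proof.
rewrite inE; apply: (iffP andP) => -[-> hS]; split=> //.
- by move=> p /(forall_inP hS)/eqP.
- by apply/forall_inP => p /hS ->.
Qed.

Lemma V_set0 : V H set0 = H.
Proof. by apply/setP => h; apply/VP/idP => [[]//|]; split=> // p; rewrite inE. Qed.

Lemma V_subset S T : S \subset T -> V H T \subset V H S.
Proof.
move=> ST; apply/subsetP => h /VP [hH hT]; apply/VP; split=> // p pS.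
exact/hT/(subsetP ST).
Qed.

Lemma run_in_V h t : h \in H -> h \in V H (run A h t).
Proof. by move=> hH; apply/VP; split=> // p /run_graph ->. Qed.

Lemma run_V_eq g h t : h \in V H (run A g t) -> run A h t = run A g t.
Proof.
elim: t => [|t IH] // hV.
have /IH /= -> : h \in V H (run A g t).
  by apply: subsetP hV; apply/V_subset/run_subset.
case Ag: (A _) => [x|] //; case/VP: hV => _ /(_ (x, g x)).
by rewrite /= Ag setU11 => /(_ isT) ->.
Qed.

End Runs.

Section Costs.
Variables (R : realFieldType) (X Y : finType) (cost : X -> Y -> R).
Hypothesis cost_gt0 : forall x y, 0 < cost x y.
Implicit Types (S T : {set X * Y}).

Lemma costS_ge0 S : 0 <= costS cost S.
Proof. by apply: sumr_ge0 => p _; apply: ltW. Qed.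

Lemma costS_subset S T : S \subset T -> costS cost S <= costS cost T.
Proof.
move=> ST; rewrite [leRHS](big_setID S) /= (setIidPr ST) lerDl.
by apply: sumr_ge0 => p _; apply: ltW.
Qed.

Lemma costS_setU1 p S : p \notin S -> costS cost (p |: S) = cost p.1 p.2 + costS cost S.
Proof. exact: big_setU1. Qed.

Lemma costS_setU1_le p S : costS cost (p |: S) <= cost p.1 p.2 + costS cost S.
Proof.
have [pS|/costS_setU1 -> //] := boolP (p \in S).
by rewrite (setUidPr _) ?sub1set // lerDr ltW.
Qed.

Lemma costA_ge (H : {set {ffun X -> Y}}) A h :
  h \in H -> costS cost (final A h) <= costA cost H A.
Proof. exact: (le_bigmax_cond _ (fun h => costS cost (final A h))). Qed.

Lemma cost_le_Rcost x y y' : cost x y <= Rcost cost * cost x y'.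
Proof.
have cost_le_max : cost x y <= maxcost cost x by apply: le_bigmax.
have maxcost_gt0 : 0 < maxcost cost x := lt_le_trans (cost_gt0 x y) cost_le_max.
have mincost_gt0 : 0 < mincost cost x.
  by apply: (big_ind (fun v => 0 < v)) => // a b a0 b0; rewrite lt_min a0.
apply: le_trans (_ : maxcost cost x / mincost cost x * mincost cost x <= _).
  by rewrite divfK ?gt_eqF.
apply: ler_pM; [exact/ltW/divr_gt0 | exact: ltW | | exact: bigmin_le].
exact: (le_bigmax _ (fun x => maxcost cost x / mincost cost x)).
Qed.

Lemma phi_le_max x y1 y2 : y1 != y2 -> phi cost x <= Num.max (cost x y1) (cost x y2).
Proof.
move=> y12; apply: nth_count_le; first exact: sort_le_sorted.
rewrite (permP (permEl (perm_sort _ _))) count_map count_enum_card.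
by apply/card_gt1P; exists y1, y2; rewrite !inE /= !le_max !lexx orbT.
Qed.

Lemma phi_gt0 x : (1 < #|Y|)%N -> 0 < phi cost x.
Proof.
move=> Y_gt1; have : phi cost x \in [seq cost x y | y <- enum Y].
  by rewrite -(perm_mem (permEl (perm_sort <=%R _))) mem_nth // size_sort size_map -cardT.
by case/mapP => y _ ->.
Qed.

Lemma cost_le_rcost x y y' :
  (1 < #|Y|)%N -> phi cost x <= cost x y' -> cost x y <= rcost cost * cost x y'.
Proof.
move=> /(phi_gt0 x) phi_gt0 phi_le.
have ratio_le : cost x y / phi cost x <= rcost cost.
  apply: le_trans (le_bigmax _ (fun x => \big[Num.max/0]_y (cost x y / phi cost x)) x).
  exact: (le_bigmax _ (fun y => cost x y / phi cost x)).
move: ratio_le; rewrite ler_pdivrMr // => /le_trans; apply; apply: ler_wpM2l => //.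
exact: bigmax_ge_id.
Qed.

Lemma Yset_cost_le (H : {set {ffun X -> Y}}) x S : (1 < #|Yset H x S|)%N ->
  exists2 h, h \in V H S & forall y, cost x y <= rcost cost * cost x (h x).
Proof.
case/card_gt1P => _ [_ [/imsetP [h1 h1V ->] /imsetP [h2 h2V ->] h12]].
have Y_gt1 : (1 < #|Y|)%N by apply/card_gt1P; exists (h1 x), (h2 x).
have := phi_le_max x h12; rewrite le_max => /orP [] phi_le.
- by exists h1 => // y; apply: cost_le_rcost.
- by exists h2 => // y; apply: cost_le_rcost.
Qed.

End Costs.

Section Submodular.
Variables (R : realFieldType) (X Y : finType) (f : {set X * Y} -> R).
Hypotheses (f_ge0 : forall S, 0 <= f S) (f_submod : submodular f) (f0 : f set0 = 0).

Lemma submodular_le_sum S : f S <= \sum_(p in S) f [set p].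
Proof.
elim: {S}_.+1 {-2}S (ltnSn #|S|) => // n IH S; rewrite ltnS => S_n.
have [->|[p pS]] := set_0Vmem S; first by rewrite f0 big_set0.
have IH_Sp : f (S :\ p) <= \sum_(q in S :\ p) f [set q].
  by apply: IH; move: S_n; rewrite (cardsD1 p S) pS.
have := f_submod [set p] (S :\ p); have := f_ge0 ([set p] :&: (S :\ p)).
rewrite (big_setD1 p pS) setD1K //=; lra.
Qed.

Lemma exists_pair_ge (Q b : R) (c : X * Y -> R) S : 0 < Q -> Q <= f S ->
  b * (\sum_(p in S) c p) <= Q -> exists2 p, p \in S & b * c p <= Num.min (f [set p]) Q.
Proof.
move=> Q_gt0 Q_le bc_le; apply/exists_inP; apply: contraT => /exists_inPn small.
have [q qS] : exists q, q \in S.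
  by apply/set0Pn; apply: contraTneq Q_le => ->; rewrite f0 -ltNge.
have : Num.min (f S) Q < b * (\sum_(p in S) c p).
  apply: le_lt_trans (le_min2 (submodular_le_sum S) (lexx Q)) _.
  apply: le_lt_trans (min_sum_le (ltW Q_gt0) (fun p _ => f_ge0 _)) _.
  rewrite mulr_sumr; apply: ltr_sum => [|p /small]; last by rewrite -ltNge.
  by apply/hasP; exists q; rewrite ?mem_index_enum.
by rewrite (min_r Q_le); lra.
Qed.

End Submodular.

Section Adversary.
Variables (R : realFieldType) (X Y : finType) (H : {set {ffun X -> Y}})
  (cost : X -> Y -> R) (A : ialg X Y) (gamma : R).
Hypotheses (cost_gt0 : forall x y, 0 < cost x y)
  (gamma_bif : bifurcating H A -> gamma = rcost cost)
  (gamma_nbif : ~ bifurcating H A -> gamma = Rcost cost).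

Lemma selected_cost_le h s x : h \in H -> A (run A h s) = Some x ->
  exists2 h', h' \in V H (run A h s) & forall y, cost x y <= gamma * cost x (h' x).
Proof.
move=> hH As; have [bif|nbif] := classic (bifurcating H A).
  by rewrite (gamma_bif bif); apply: (Yset_cost_le cost_gt0); exact: bif hH As.
rewrite (gamma_nbif nbif); exists h => [|y]; first exact: run_in_V.
exact: (cost_le_Rcost cost_gt0).
Qed.

Lemma gamma_ge1 h s x : h \in H -> A (run A h s) = Some x -> 1 <= gamma.
Proof. by move=> hH /(selected_cost_le hH) [h' _ /(_ (h' x))]; rewrite ler_pMl. Qed.

Variables (f : {set X * Y} -> R) (Q : R).
Hypotheses (Q_gt0 : 0 < Q) (f0 : f set0 = 0) (f_aware : consistency_aware H f Q)
  (A_term : terminates A H) (A_reaches : forall h, h \in H -> Q <= f (final A h)).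

Lemma H_neq0 : H != set0.
Proof.
apply: contraTneq Q_gt0 => H0; rewrite -leNgt -f0.
by apply: f_aware; rewrite V_set0.
Qed.

Definition horizon := (\max_(h in H) stop_time A h)%N.

Lemma final_horizon h : h \in H -> final A h = run A h horizon.
Proof. by move=> hH; apply: final_run (A_term hH) _; apply: leq_bigmax_cond. Qed.

Definition cheap_cover (g : {ffun X -> Y}) (S : {set X * Y}) :=
  [/\ forall p, p \in S -> p.2 = g p.1, Q <= f S, 1 <= gamma &
      costS cost S <= gamma * costA cost H A].

Lemma consistent_cover g : V H (run A g horizon) != set0 -> exists S, cheap_cover g S.
Proof.
case/set0Pn => h hV; have hH : h \in H by case/VP: hV.
have final_h : final A h = run A g horizon by rewrite final_horizon // (run_V_eq hV).
have Q_le : Q <= f (run A g horizon) by rewrite -final_h; apply: A_reaches.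
have [s [x As]] : exists s x, A (run A h s) = Some x.
  apply: (run_neq0_select (t := horizon)); rewrite (run_V_eq hV).
  by apply: contraTneq Q_le => ->; rewrite f0 -ltNge.
have gamma1 := gamma_ge1 hH As.
exists (run A g horizon); split => //; first exact: run_graph.
rewrite -final_h; apply: le_trans (costA_ge cost A hH) _.
by rewrite ler_peMl // bigmax_ge_id.
Qed.

Lemma diverging_cost_le g s x h : A (run A g s) = Some x -> h \in V H (run A g s) ->
  h x != g x -> cost x (h x) + costS cost (run A g s) <= costA cost H A.
Proof.
move=> Ag hV hx_neq; have hH : h \in H by case/VP: hV.
have fresh : (x, h x) \notin run A g s by apply: contra hx_neq => /run_graph /= ->.
rewrite -(costS_setU1 cost fresh); apply: le_trans (costA_ge cost A hH).
have -> : (x, h x) |: run A g s = run A h s.+1 by rewrite /= (run_V_eq hV) Ag.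
exact/(costS_subset cost_gt0)/run_subset_final/A_term.
Qed.

Lemma inconsistent_cover g : V H (run A g horizon) = set0 -> exists S, cheap_cover g S.
Proof.
move=> V_end; have ex_t : exists t, V H (run A g t) == set0 by exists horizon; rewrite V_end.
(* s.+1 is the first step after which no hypothesis of H agrees with g. *)
case: (ex_minnP ex_t) => -[|s] /eqP V_t t_min.
  by move: V_t; rewrite /= V_set0 => /eqP; rewrite (negbTE H_neq0).
have [h hV] : exists h, h \in V H (run A g s).
  by apply/set0Pn/negP => /t_min; rewrite ltnn.
move: V_t => /=; case Ag: (A (run A g s)) => [x|] V_t; last by move: hV; rewrite V_t inE.
have hH : h \in H by case/VP: hV.
have Ah : A (run A h s) = Some x by rewrite (run_V_eq hV).
have gamma1 := gamma_ge1 hH Ah.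
have [h' h'V cost_le] := selected_cost_le hH Ah; rewrite (run_V_eq hV) in h'V.
have h'x_neq : h' x != g x.
  apply/eqP => h'x; suff : h' \in V H ((x, g x) |: run A g s) by rewrite V_t inE.
  by case/VP: h'V => h'H h'S; apply/VP; split=> // p /setU1P [-> //|/h'S].
exists ((x, g x) |: run A g s); split => //.
- by move=> p /setU1P [-> //|/run_graph].
- by apply: f_aware.
apply: le_trans (costS_setU1_le cost_gt0 _ _) _.
apply: le_trans (_ : gamma * (cost x (h' x) + costS cost (run A g s)) <= _).
  by rewrite mulrDr lerD // ler_peMl // (costS_ge0 cost_gt0).
by apply: ler_wpM2l; [exact: le_trans ler01 gamma1 | exact: diverging_cost_le Ag h'V h'x_neq].
Qed.

Lemma adversary_cover g : exists S, cheap_cover g S.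
Proof.
have [/eqP|] := boolP (V H (run A g horizon) == set0).
  exact: inconsistent_cover.
exact: consistent_cover.
Qed.

Lemma ratio_u_set0 x h :
  ratio_u f Q cost x set0 h = Num.min (f [set (x, h x)]) Q / cost x (h x).
Proof. by rewrite /ratio_u /deltaQ setU0 f0 (min_l (ltW Q_gt0)) subr0. Qed.

Lemma ufun_set0_lt x b : ufun H f Q cost x set0 < b ->
  exists2 h, h \in H & Num.min (f [set (x, h x)]) Q < b * cost x (h x).
Proof.
move=> u_lt; apply/exists_inP; apply: contraTT u_lt => /exists_inPn ratio_ge.
have {}ratio_ge h : h \in H -> b <= ratio_u f Q cost x set0 h.
  by move/ratio_ge; rewrite ratio_u_set0 ler_pdivlMr // leNgt.
rewrite -leNgt /ufun V_set0; case: pickP => [h0 h0H | H0].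
  by apply: le_bigmin => [|h /ratio_ge]; first exact: ratio_ge.
by case/set0Pn: H_neq0 => h; rewrite H0.
Qed.

End Adversary.

Theorem lemma2 (R : realFieldType) (X Y : finType)
  (H : {set {ffun X -> Y}}) (cost : X -> Y -> R)
  (f : {set X * Y} -> R) (Q eta : R) (A : ialg X Y) :
  (forall x y, 0 < cost x y) ->
  (forall S, 0 <= f S) ->
  0 < Q -> 0 < eta ->
  monotone f -> submodular f -> f set0 = 0 ->
  (forall S, Q - eta <= f S -> Q <= f S) ->
  consistency_aware H f Q ->
  terminates A H ->
  (forall h, h \in H -> Q <= f (final A h)) ->
  forall gamma : R,
  (bifurcating H A -> gamma = rcost cost) ->
  (~ bifurcating H A -> gamma = Rcost cost) ->
  exists x : X, Q / (gamma * costA cost H A) <= ufun H f Q cost x set0.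
Proof.
move=> cost_gt0 f_ge0 Q_gt0 _ _ f_submod f0 _ f_aware A_term A_reaches.
move=> gamma gamma_bif gamma_nbif.
set b := Q / (gamma * costA cost H A).
apply/existsP; apply: contraT => /existsPn u_small.
have small x : exists h, (h \in H) && (Num.min (f [set (x, h x)]) Q < b * cost x (h x)).
  have := u_small x; rewrite -ltNge => /(ufun_set0_lt cost_gt0 Q_gt0 f0 f_aware) [h hH h_lt].
  by exists h; rewrite hH.
pose g := [ffun x => xchoose (small x) x].
have g_small x : Num.min (f [set (x, g x)]) Q < b * cost x (g x).
  by rewrite ffunE; case/andP: (xchooseP (small x)).
have [S [S_g Q_le gamma1 cost_le]] :=
  adversary_cover cost_gt0 gamma_bif gamma_nbif Q_gt0 f0 f_aware A_term A_reaches g.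
have costA_ge0 : 0 <= costA cost H A by apply: bigmax_ge_id.
have b_ge0 : 0 <= b by rewrite divr_ge0 ?mulr_ge0 ?(ltW Q_gt0) ?(le_trans ler01 gamma1).
have bcost_le : b * costS cost S <= Q.
  apply: le_trans (ler_wpM2l b_ge0 cost_le) _.
  have [->|nz] := eqVneq (gamma * costA cost H A) 0; first by rewrite mulr0 ltW.
  by rewrite divfK.
have [[x y] xyS] := exists_pair_ge f_ge0 f_submod f0 Q_gt0 Q_le bcost_le.
by have /= -> := S_g _ xyS; rewrite leNgt (g_small x).
Qed.
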